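(* Let $\Gamma$ be a finitely generated group and for $i=1,2$ let $\mathbb{F}_i$ be a free group on a finite basis $X_i$ and $\pi_i:\mathbb{F}_i\twoheadrightarrow\Gamma$ an epimorphism. If $\Gamma$ is stable with respect to $\pi_1$, then it is stable with respect to $\pi_2$. Moreover there exists $C_0\ge 1$ such that for all $x\ge1$: (i) if $\pi_1$ is an isomorphism then $F_\Gamma^{\pi_2}(x)\le C_0x$; (ii) if $\pi_1$ is not an isomorphism then $F_\Gamma^{\pi_2}(x)\le C_0F_\Gamma^{\pi_1}(C_0x)$.
   Context: For a finite set $\Omega$, $d_\Omega(\sigma,\tau)=|\{\omega:\sigma(\omega)\ne\tau(\omega)\}|/|\Omega|$. For an epimorphism $\pi:\mathbb{F}\twoheadrightarrow\Gamma$ from a free group on finite basis $X$ and $\epsilon>0$, a pair $(\delta,E)$ with $\delta\in(0,1]$, $E\subseteq\ker\pi$ finite, is valid for $\epsilon$ if for every finite $\Omega$ and every homomorphism $\rho:\mathbb{F}\to\mathrm{Sym}(\Omega)$ with $d_\Omega(\rho(r),\mathrm{id})<\delta$ for all $r\in E$, there is a homomorphism $\phi:\Gamma\to\mathrm{Sym}(\Omega)$ with $d_\Omega(\rho(x),\phi(\pi(x)))<\epsilon$ for all $x\in X$. $\Gamma$ is stable w.r.t. $\pi$ if valid pairs exist for all $\epsilon>0$. $F_\Gamma^\pi(x)=\inf\{\|E\|/\delta:(\delta,E)\text{ valid for }1/x\}$, where $\|E\|=\sum_{r\in E}|r|$ with word length in $X$. *)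

From HB Require Import structures.
From mathcomp Require Import all_boot all_order all_algebra all_fingroup.
From mathcomp Require Import all_classical all_reals.
Set Implicit Arguments. Unset Strict Implicit. Unset Printing Implicit Defensive.
Import Order.TTheory GRing.Theory Num.Theory.
Local Open Scope ring_scope.
Local Open Scope classical_set_scope.

(* a letter (x, false) is x, (x, true) is x^{-1} *)
Definition cancels (X : finType) (a b : X * bool) : bool :=
  (a.1 == b.1) && (a.2 != b.2).

Fixpoint reducedb (X : finType) (w : seq (X * bool)) : bool :=
  match w with
  | a :: ((b :: _) as w') => ~~ cancels a b && reducedb w'
  | _ => true
  end.

Definition cons_red (X : finType) (a : X * bool) (w : seq (X * bool)) :=
  match w with
  | b :: w' => if cancels a b then w' else a :: w
  | [::] => [:: a]
  end.

Definition fred (X : finType) (s : seq (X * bool)) := foldr (@cons_red X) [::] s.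

Lemma reducedb_tail (X : finType) (b : X * bool) w :
  reducedb (b :: w) -> reducedb w.
Proof. by case: w => [|c w] //= /andP[]. Qed.

Lemma cons_red_reduced (X : finType) (a : X * bool) w :
  reducedb w -> reducedb (cons_red a w).
Proof.
case: w => [|b w] //= Hw; case: ifP => Hab; first exact: reducedb_tail Hw.
by rewrite /= Hab.
Qed.

Lemma fred_reduced (X : finType) (s : seq (X * bool)) : reducedb (fred s).
Proof. by elim: s => [|a s IH] //=; apply: cons_red_reduced. Qed.

Definition FG (X : finType) := {w : seq (X * bool) | reducedb w}.

Definition fmul (X : finType) (u v : FG X) : FG X :=
  exist _ (fred (sval u ++ sval v)) (fred_reduced _).

Definition gen (X : finType) (x : X) : FG X := exist _ [:: (x, false)] isT.

Definition wlen (X : finType) (u : FG X) : nat := size (sval u).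

Record grp := Grp {
  gcar :> Type;
  gmul : gcar -> gcar -> gcar;
  gone : gcar;
  ginv : gcar -> gcar;
  gmulA : associative gmul;
  gmul1 : left_id gone gmul;
  gmulV : left_inverse gone ginv gmul }.

Definition FG_hom (X : finType) (G : grp) (pi : FG X -> G) : Prop :=
  forall u v, pi (fmul u v) = @gmul G (pi u) (pi v).

Definition FG_epi (X : finType) (G : grp) (pi : FG X -> G) : Prop :=
  FG_hom pi /\ (forall g : G, exists w, pi w = g).

Definition FG_perm_hom (X : finType) (Om : finType) (rho : FG X -> {perm Om}) : Prop :=
  forall u v, rho (fmul u v) = (rho u * rho v)%g.

Definition grp_perm_hom (G : grp) (Om : finType) (phi : G -> {perm Om}) : Prop :=
  forall a b, phi (@gmul G a b) = (phi a * phi b)%g.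

Definition dOm (R : realType) (Om : finType) (s t : {perm Om}) : R :=
  (#|[pred w | s w != t w]|)%:R / (#|Om|)%:R.

Definition normE (X : finType) (E : seq (FG X)) : nat := \sum_(r <- E) wlen r.

(* (delta, E) is valid for eps; the finite set E is given as a duplicate-free list *)
Definition valid (R : realType) (X : finType) (G : grp) (pi : FG X -> G)
    (eps delta : R) (E : seq (FG X)) : Prop :=
  [/\ 0 < delta <= 1, uniq E, (forall r, r \in E -> pi r = @gone G) &
    forall (Om : finType) (rho : FG X -> {perm Om}), FG_perm_hom rho ->
      (forall r, r \in E -> dOm R (rho r) 1%g < delta) ->
      exists phi : G -> {perm Om}, grp_perm_hom phi /\
        forall x : X, dOm R (rho (gen x)) (phi (pi (gen x))) < eps].

Definition stable (R : realType) (X : finType) (G : grp) (pi : FG X -> G) : Prop :=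
  forall eps : R, 0 < eps -> exists delta E, valid pi eps delta E.

Definition Fstab (R : realType) (X : finType) (G : grp) (pi : FG X -> G) (x : R) : R :=
  inf [set t : R | exists delta E, valid pi x^-1 delta E /\ t = (normE E)%:R / delta].

From mathcomp Require Import all_boot all_order all_algebra all_fingroup.
From mathcomp Require Import all_classical all_reals.
From mathcomp Require Import ring lra zify.
Import Order.TTheory GRing.Theory Num.Theory.

Set Implicit Arguments. Unset Strict Implicit. Unset Printing Implicit Defensive.

(* Fix words v x in F(X2) with pi2 (v x) = pi1 x and u y in F(X1) with
   pi1 (u y) = pi2 y, and let psi : F(X1) -> F(X2) substitute v x for x.  A pair
   (delta, E) valid for pi1 yields the pair (min delta (eps/2), psi(E) together
   with the relators y^-1 psi(u y)) for pi2: if rho almost satisfies these, then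
   rho o psi almost satisfies E, hence is close on X1 to some action phi of Gamma,
   and rho y is close to rho (psi (u y)), which is close to phi (pi2 y) because
   u y has bounded length.  The new relators have total length at most
   M ||E|| + K for constants M and K.
   If pi1 is an isomorphism, (1, []) is valid for every eps, whence the linear
   bound.  Otherwise a nontrivial reduced word w = v^-1 u of length k lies in
   ker pi1.  Letting F(X1) act on a path 0, ..., N with N + 1 close to 1/eps, so
   that reading w walks from 0 to k, gives an action that does not factor
   through Gamma but moves only k + 1 points; so every valid pair has E nonempty
   and delta <= 2 (k + 1) eps, which absorbs both K and the cap eps/2. *)

Section GroupTheory.
Variable H : grp.
Local Notation "a * b" := (@gmul H a b).
Local Notation "1" := (@gone H).
Local Notation "a ^-1" := (@ginv H a).

Lemma gmul_idem1 (a : H) : a * a = a -> a = 1.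
Proof. by move=> aa; have := gmulV a; rewrite -{2}aa gmulA gmulV gmul1. Qed.

Lemma gmulVr (a : H) : a * a^-1 = 1.
Proof. by apply: gmul_idem1; rewrite -gmulA (gmulA a^-1) gmulV gmul1. Qed.

Lemma gmulr1 (a : H) : a * 1 = a.
Proof. by rewrite -(gmulV a) gmulA gmulVr gmul1. Qed.

Lemma ginv_unique (a b : H) : a * b = 1 -> a = b^-1.
Proof. by move=> ab1; rewrite -(gmulr1 a) -(gmulVr b) gmulA ab1 gmul1. Qed.

Lemma ginvK (a : H) : (a^-1)^-1 = a.
Proof. by symmetry; apply: ginv_unique; rewrite gmulVr. Qed.

Lemma ginvM (a b : H) : (a * b)^-1 = b^-1 * a^-1.
Proof.
by symmetry; apply: ginv_unique; rewrite -gmulA (gmulA a^-1) gmulV gmul1 gmulV.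
Qed.

Lemma ginv1 : 1^-1 = 1.
Proof. by symmetry; apply: ginv_unique; rewrite gmul1. Qed.

End GroupTheory.

Section Words.
Variable X : finType.
Implicit Types (a b : X * bool) (s w : seq (X * bool)) (u v : FG X).

Definition flip_letter a := (a.1, ~~ a.2).
Definition invw s := rev (map flip_letter s).

Lemma fred_cat s w : fred (s ++ w) = foldr (@cons_red X) (fred w) s.
Proof. exact: foldr_cat. Qed.

Lemma fred_id w : reducedb w -> fred w = w.
Proof.
elim: w => [|a w IH] //= w_red; rewrite IH; last exact: reducedb_tail w_red.
by case: w w_red {IH} => [|b w] //= /andP[/negbTE ->].
Qed.

Lemma size_fred s : size (fred s) <= size s.
Proof.
elim: s => [|a s IH] //=; apply: leq_trans (IH : size (fred s) < (size s).+1).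
by case: (fred s) => [|b w] //=; case: ifP => //= _; rewrite ltnW.
Qed.

Lemma cons_red_flipK a w : reducedb w -> cons_red a (cons_red (flip_letter a) w) = w.
Proof.
have a_flip : cancels a (flip_letter a) by rewrite /cancels /= eqxx; case: a.2.
case: w => [|b w] w_red /=; first by rewrite a_flip.
case: ifP => [flip_b|_]; last by rewrite /= a_flip.
have {flip_b} <- : b = a.
  by case: a b flip_b {a_flip w_red} => [x p] [y q] /andP[/= /eqP ->]; case: p; case: q.
by case: w w_red => [|c w] //= /andP[/negbTE ->].
Qed.

Lemma fred_cat_invw s w : reducedb w -> foldr (@cons_red X) w (s ++ invw s) = w.
Proof.
elim: s w => [|a s IH] w w_red //=.
rewrite /invw /= rev_cons -cats1 -/(invw s) catA foldr_cat /=.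
by rewrite IH ?cons_red_flipK // cons_red_reduced.
Qed.

Definition ldivw v u := fred (invw (sval v) ++ sval u).

Lemma ldivw_nil u v : ldivw v u = [::] -> u = v.
Proof.
case: u v => [u u_red] [v v_red]; rewrite /ldivw /= => uv_nil; apply: val_inj => /=.
have <- : fred (v ++ (invw v ++ u)) = v by rewrite fred_cat uv_nil -/(fred v) fred_id.
by rewrite catA fred_cat fred_cat_invw fred_id ?fred_id.
Qed.

Definition FG1 : FG X := exist _ [::] isT.

Lemma normE_undup (E : seq (FG X)) : normE (undup E) <= normE E.
Proof.
rewrite /normE; elim: E => [|r E IH] //=; rewrite big_cons.
by case: ifP => _; rewrite ?big_cons ?leq_add2l // (leq_trans IH) ?leq_addl.
Qed.

Lemma wlen_le_normE (E : seq (FG X)) r : r \in E -> wlen r <= normE E.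
Proof.
rewrite /normE; elim: E => [|a E IH] //; rewrite in_cons big_cons => /orP[/eqP ->|/IH].
  exact: leq_addr.
by move/leq_trans; apply; apply: leq_addl.
Qed.

End Words.

Definition eval_letter (X : finType) (H : grp) (g : X -> H) (a : X * bool) : H :=
  if a.2 then ginv (g a.1) else g a.1.

Definition eval_word (X : finType) (H : grp) (g : X -> H) (w : seq (X * bool)) : H :=
  foldr (fun a => gmul (eval_letter g a)) (gone H) w.

Section Evaluation.
Variables (X : finType) (H : grp) (g : X -> H).

Lemma eq_eval_word (g' : X -> H) w : g =1 g' -> eval_word g w = eval_word g' w.
Proof. by move=> gg'; elim: w => [|a w IH] //=; rewrite IH /eval_letter gg'. Qed.

Lemma eval_word_cat u w : eval_word g (u ++ w) = gmul (eval_word g u) (eval_word g w).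
Proof. by elim: u => [|a u IH] /=; rewrite ?gmul1 // IH gmulA. Qed.

Lemma eval_word_invw w : eval_word g (invw w) = ginv (eval_word g w).
Proof.
elim: w => [|a w IH]; first by rewrite ginv1.
rewrite /invw /= rev_cons -cats1 eval_word_cat -/(invw w) IH /= ginvM gmulr1.
by rewrite /eval_letter /=; case: a.2; rewrite ?ginvK.
Qed.

Lemma eval_word_cons_red a w :
  eval_word g (cons_red a w) = gmul (eval_letter g a) (eval_word g w).
Proof.
case: w => [|b w] //=; case: ifP => //= /andP[/eqP ab1 ab2].
rewrite gmulA /eval_letter ab1; case: a b ab1 ab2 => x [] [y []] //= _ _.
  by rewrite gmulV gmul1.
by rewrite gmulVr gmul1.
Qed.

Lemma eval_word_fred s : eval_word g (fred s) = eval_word g s.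
Proof. by elim: s => [|a s IH] //=; rewrite eval_word_cons_red IH. Qed.

End Evaluation.

Section Homomorphisms.
Variables (X : finType) (H : grp) (h : FG X -> H).
Hypothesis h_hom : FG_hom h.

Lemma hom_FG1 : h (FG1 X) = gone H.
Proof. by apply: gmul_idem1; rewrite -h_hom; congr h; apply: val_inj. Qed.

Lemma hom_eval_word u : h u = eval_word (fun x => h (gen x)) (sval u).
Proof.
case: u => w; elim: w => [|a w IH] w_red /=.
  by rewrite -hom_FG1; congr h; apply: val_inj.
have a_red : reducedb [:: a] by [].
have -> : exist _ (a :: w) w_red = fmul (exist _ [:: a] a_red) (exist _ w (reducedb_tail w_red)).
  apply: val_inj; rewrite /= -/(fred w) fred_id ?(reducedb_tail w_red) //.
  by case: w w_red {IH} => [|b w] //= /andP[/negbTE ->].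
rewrite h_hom IH /=; congr gmul; case: a a_red {w_red} => x [] a_red; last by congr h; apply: val_inj.
apply: ginv_unique; rewrite -h_hom -hom_FG1; congr h; apply: val_inj.
by rewrite /= /cancels /= eqxx.
Qed.

End Homomorphisms.

Lemma FG_hom_eval_word (X : finType) (H : grp) (g : X -> H) :
  FG_hom (fun r : FG X => eval_word g (sval r)).
Proof. by move=> r s; rewrite /= eval_word_fred eval_word_cat. Qed.

Definition perm_grp (Om : finType) : grp :=
  Grp (@mulgA {perm Om}) (@mul1g {perm Om}) (@mulVg {perm Om}).

Section Hamming.
Variable Om : finType.
Implicit Types s t p q : {perm Om}.

Definition hamming s t := #|[pred w | s w != t w]|.

Lemma dOmE (R : realType) s t : dOm R s t = ((hamming s t)%:R / #|Om|%:R)%R.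
Proof. by []. Qed.

Lemma hamming_refl s : hamming s s = 0.
Proof. by apply: eq_card0 => w; rewrite !inE eqxx. Qed.

Lemma hamming_eq0 s t : hamming s t = 0 -> s = t.
Proof. by move=> /card0_eq st; apply/permP => w; apply/eqP/negbFE; have := st w. Qed.

Lemma hamming_sym s t : hamming s t = hamming t s.
Proof. by apply: eq_card => w; rewrite !inE eq_sym. Qed.

Lemma hamming_triangle s t p : hamming s p <= hamming s t + hamming t p.
Proof.
rewrite /hamming -cardUI (leq_trans _ (leq_addr _ _)) //.
apply: subset_leq_card; apply/fintype.subsetP => w; rewrite !inE /=.
by case: (eqVneq (s w) (t w)) => [->|].
Qed.

Lemma card_pred_perm (P : pred Om) s : #|[pred w | P (s w)]| = #|[pred w | P w]|.
Proof.
rewrite -(card_imset [pred w | P (s w)] (@perm_inj _ s)); apply: eq_card => w.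
rewrite inE; apply/imsetP/idP => [[v Pv ->] //|Pw].
by exists (s^-1 w)%g; rewrite ?inE permKV.
Qed.

Lemma hamming_mul s t p q : hamming (s * t)%g (p * q)%g <= hamming s p + hamming t q.
Proof.
apply: leq_trans (hamming_triangle _ (s * q)%g _) _.
rewrite [hamming s p + _]addnC leq_add //.
  apply: eq_leq; rewrite /hamming -[RHS](card_pred_perm (fun w => t w != q w) s).
  by apply: eq_card => w; rewrite !inE /= !permM.
by apply: eq_leq; apply: eq_card => w; rewrite !inE /= !permM (inj_eq (@perm_inj _ q)).
Qed.

Lemma hamming_inv s t : hamming s^-1 t^-1 = hamming s t.
Proof.
rewrite /hamming -[RHS](card_pred_perm (fun w => s w != t w) s^-1).
apply: eq_card => w; rewrite !inE /= permKV -(inj_eq (@perm_inj _ t)) permKV.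
by rewrite eq_sym.
Qed.

Lemma hamming_mulV1 s t : hamming (s^-1 * t)%g 1%g = hamming s t.
Proof.
rewrite [RHS]hamming_sym /hamming -[RHS](card_pred_perm (fun w => t w != s w) s^-1).
by apply: eq_card => w; rewrite !inE /= permM perm1 permKV.
Qed.

Lemma hamming_eval_word (X : finType) (g g' : X -> {perm Om}) w :
  hamming (@eval_word X (perm_grp Om) g w) (@eval_word X (perm_grp Om) g' w) <=
  size w * \sum_x hamming (g x) (g' x).
Proof.
elim: w => [|a w IH] /=; first by rewrite hamming_refl.
apply: leq_trans (hamming_mul _ _ _ _) _; rewrite mulSn leq_add //.
by rewrite /eval_letter; case: a.2; rewrite ?hamming_inv (bigD1 a.1) //= leq_addr.
Qed.

End Hamming.

Lemma partial_inj_perm (T : finType) (f : T -> option T) :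
  (forall a b y, f a = Some y -> f b = Some y -> a = b) ->
  exists p : {perm T}, forall a y, f a = Some y -> p a = y.
Proof.
move=> f_inj.
pose dom := [pred t | f t != None].
pose img := [set odflt t (f t) | t in dom].
have card_dom_img : #|dom| = #|img|.
  rewrite card_in_imset //.
  move=> a b; rewrite !inE; case fa: (f a) => [ya|] //; case fb: (f b) => [yb|] //= _ _ ab.
  by rewrite ab in fa; apply: f_inj fa fb.
pose cdom := enum (predC dom); pose cimg := enum (predC (mem img)).
have size_cdom : size cdom = size cimg.
  by rewrite -!cardE; apply/eqP; rewrite -(eqn_add2l #|dom|) cardC card_dom_img cardC.
pose g t := if f t is Some y then y else nth t cimg (index t cdom).
have g_out t : f t = None -> g t \notin img.
  move=> ft; rewrite /g ft -[_ \notin _]/(_ \in predC (mem img)) -mem_enum.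
  by rewrite mem_nth // -size_cdom index_mem mem_enum !inE ft.
have g_in t y : f t = Some y -> g t \in img.
  by move=> ft; apply/imsetP; exists t; rewrite ?inE /g ft.
have g_inj : injective g.
  move=> a b; case fa: (f a) => [ya|]; case fb: (f b) => [yb|].
  - by rewrite /g fa fb => ab; rewrite ab in fa; apply: f_inj fa fb.
  - by move=> ab; have := g_out b fb; rewrite -ab (g_in a ya).
  - by move=> ab; have := g_out a fa; rewrite ab (g_in b yb).
  have a_cdom : a \in cdom by rewrite mem_enum !inE fa.
  have b_cdom : b \in cdom by rewrite mem_enum !inE fb.
  rewrite /g fa fb => ab; rewrite -(nth_index a a_cdom) -(nth_index a b_cdom).
  congr nth; apply/eqP; rewrite -(nth_uniq a _ _ (enum_uniq (predC (mem img)))) -/cimg.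
  - by rewrite ab (set_nth_default a) // -size_cdom index_mem.
  - by rewrite -size_cdom index_mem.
  - by rewrite -size_cdom index_mem.
by exists (perm g_inj) => a y fa; rewrite permE /g fa.
Qed.

Lemma reducedb_nth (X : finType) (a0 : X * bool) (s : seq (X * bool)) j :
  reducedb s -> j.+1 < size s -> ~~ cancels (nth a0 s j) (nth a0 s j.+1).
Proof.
elim: s j => [|a s IH] [|j] //= s_red; last by apply: IH; apply: reducedb_tail s_red.
by case: s s_red {IH} => [|b s] //= /andP[].
Qed.

Section PathAction.
Variables (X : finType) (a0 : X * bool) (s : seq (X * bool)) (N : nat).
Hypotheses (s_red : reducedb s) (s_le_N : size s <= N).
Local Notation k := (size s).

(* x walks t to t + 1 across a letter (x, false) at position t and back across
   a letter (x, true) at position t - 1, so reading s walks 0 to size s; points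
   beyond size s are fixed. *)
Definition path_step (x : X) (t : 'I_N.+1) : option 'I_N.+1 :=
  if k < t then Some t
  else if (t < k) && (nth a0 s t == (x, false)) then Some (inord t.+1)
  else if (0 < t) && (nth a0 s t.-1 == (x, true)) then Some (inord t.-1)
  else None.

Lemma path_stepP x t y : path_step x t = Some y ->
  [\/ k < t /\ (y : nat) = t,
      [/\ t < k, nth a0 s t = (x, false) & (y : nat) = t.+1] |
      [/\ 0 < t, t <= k, nth a0 s t.-1 = (x, true) & (y : nat) = t.-1]].
Proof.
rewrite /path_step; case: ltnP => t_k; first by case=> <-; constructor 1.
case: ifP => [/andP[t_lt /eqP st] [<-]|_].
  by constructor 2; split=> //; rewrite inordK //; lia.
case: ifP => [/andP[t_gt0 /eqP st] [<-]|//].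
by constructor 3; split=> //; rewrite inordK //; lia.
Qed.

Lemma path_step_inj x a b y : path_step x a = Some y -> path_step x b = Some y -> a = b.
Proof.
have no_backtrack j : j.+1 < k -> (nth a0 s j).1 = x -> (nth a0 s j.+1).1 = x ->
    (nth a0 s j).2 = (nth a0 s j.+1).2.
  move=> j_lt sj_x sj1_x; have := reducedb_nth a0 s_red j_lt.
  by rewrite /cancels sj_x sj1_x eqxx /= negbK => /eqP.
move=> /path_stepP sa /path_stepP sb; apply: ord_inj.
case: sa => [[? ?]|[? sa ?]|[? ? sa ?]]; case: sb => [[? ?]|[? sb ?]|[? ? sb ?]]; try lia.
- have ab : b.-1 = a.+1 by lia.
  by have := no_backtrack a; rewrite -ab sa sb /=; move/(_ _ erefl erefl); lia.
- have ba : a.-1 = b.+1 by lia.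
  by have := no_backtrack b; rewrite -ba sa sb /=; move/(_ _ erefl erefl); lia.
Qed.

Lemma exists_path_perms :
  exists g : X -> {perm 'I_N.+1}, forall x t y, path_step x t = Some y -> g x t = y.
Proof.
by have [p p_path] := choice (fun x => partial_inj_perm (@path_step_inj x)); exists p.
Qed.

Variable g : X -> {perm 'I_N.+1}.
Hypothesis g_path : forall x t y, path_step x t = Some y -> g x t = y.
Local Notation eval := (@eval_word X (perm_grp 'I_N.+1) g).

Lemma eval_word_path_fix w (t : 'I_N.+1) : k < t -> eval w t = t.
Proof.
move=> k_t; have g_fix x : g x t = t by apply: g_path; rewrite /path_step k_t.
elim: w => [|a w IH] /=; first by rewrite perm1.
rewrite permM /eval_letter; case: a.2; last by rewrite g_fix.
by rewrite -{1}(g_fix a.1) permK IH.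
Qed.

Lemma eval_word_path_prefix i : i <= k -> eval (take i s) (inord 0) = inord i.
Proof.
elim: i => [|i IH] i_k; first by rewrite take0 /= perm1.
rewrite (take_nth a0); last by lia.
rewrite -cats1 eval_word_cat /= permM IH; last by lia.
rewrite mulg1 /eval_letter; case si: (nth a0 s i) => [x []] /=.
- suff gx : g x (inord i.+1) = inord i by rewrite -gx permK.
  apply: g_path; rewrite /path_step inordK; last by lia.
  have -> : (k < i.+1) = false by lia.
  case: ifP => [/andP[i1_k /eqP si1]|_]; last by rewrite /= si eqxx.
  by have := reducedb_nth a0 s_red i1_k; rewrite si si1 /cancels /= eqxx.
- apply: g_path; rewrite /path_step inordK; last by lia.
  have -> : (k < i) = false by lia.
  by rewrite si eqxx andbT i_k.
Qed.

End PathAction.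

Lemma card_ord_bounded (n k : nat) (A : {pred 'I_n}) :
  (forall t, t \in A -> t <= k) -> #|A| <= k.+1.
Proof.
move=> A_le; rewrite cardE -(size_map val) -(size_iota 0 k.+1) uniq_leq_size //.
  by rewrite (map_inj_uniq val_inj) enum_uniq.
by move=> _ /mapP[t tA ->]; rewrite mem_iota ltnS A_le // -mem_enum.
Qed.

Lemma exists_path_rep (X : finType) (s : seq (X * bool)) (N : nat) :
  reducedb s -> 0 < size s <= N ->
  exists rho : FG X -> {perm 'I_N.+1},
    [/\ FG_perm_hom rho, @eval_word X (perm_grp _) (fun x => rho (gen x)) s != 1%g
      & forall r, hamming (rho r) 1 <= (size s).+1].
Proof.
case: s => [//|a0 s'] s_red /andP[_ s_le_N]; set s := a0 :: s' in s_red s_le_N *.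
have [g g_path] := @exists_path_perms X a0 s N s_red s_le_N.
pose rho (r : FG X) := @eval_word X (perm_grp 'I_N.+1) g (sval r).
have rho_gen x : rho (gen x) = g x by rewrite /rho /= mulg1.
exists rho; split.
- exact: (@FG_hom_eval_word _ (perm_grp _)).
- rewrite (eq_eval_word _ rho_gen); apply/eqP => /(congr1 (fun p : {perm _} => p (inord 0))).
  rewrite -{1}(take_size s) (eval_word_path_prefix s_red s_le_N g_path) // perm1.
  by move/(congr1 val); rewrite /= !inordK //; lia.
move=> r; apply: card_ord_bounded => t; rewrite inE perm1; apply: contraR; rewrite -ltnNge.
by move=> k_t; apply/eqP; apply: (eval_word_path_fix g_path).
Qed.

Section Presentation.
Variables (R : realType) (G : grp) (X : finType) (pi : FG X -> G).
Hypothesis pi_hom : FG_hom pi.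
Local Open Scope ring_scope.

Lemma dOm_lt_eq (Om : finType) (s t : {perm Om}) (eps : R) :
  dOm R s t < eps -> #|Om|%:R * eps <= 1 -> s = t.
Proof.
move=> d_lt eps_small; apply: hamming_eq0; apply/eqP; rewrite -leqn0.
have [Om0|Om_gt0] := posnP #|Om|; first by rewrite -Om0 max_card.
move: d_lt; rewrite dOmE ltr_pdivrMr ?ltr0n // mulrC => /lt_le_trans /(_ eps_small).
by rewrite ltrn1 ltnS.
Qed.

Lemma valid_far_relator (eps delta : R) (E : seq (FG X)) (Om : finType)
    (rho : FG X -> {perm Om}) (u v : FG X) :
  valid pi eps delta E -> #|Om|%:R * eps <= 1 ->
  FG_perm_hom rho -> pi u = pi v -> rho u != rho v ->
  exists2 r, r \in E & delta <= dOm R (rho r) 1%g.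
Proof.
move=> [_ _ _ E_valid] eps_small rho_hom pi_uv rho_uv.
case: (pselect (exists2 r, r \in E & delta <= dOm R (rho r) 1%g)) => // no_far.
have [r rE|phi [phi_hom phi_close]] := E_valid Om rho rho_hom.
  by rewrite ltNge; apply/negP => far; apply: no_far; exists r.
have phi_pi_hom : @FG_hom X (perm_grp Om) (fun r => phi (pi r)).
  by move=> r s; rewrite pi_hom phi_hom.
have rho_gen x : rho (gen x) = phi (pi (gen x)).
  exact: dOm_lt_eq (phi_close x) eps_small.
case/eqP: rho_uv.
rewrite (hom_eval_word (H := perm_grp Om) rho_hom u) (hom_eval_word (H := perm_grp Om) rho_hom v).
by rewrite !(eq_eval_word (H := perm_grp Om) _ rho_gen) -!(hom_eval_word phi_pi_hom) pi_uv.
Qed.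

Lemma valid_path_bound (u v : FG X) (eps delta : R) (E : seq (FG X)) (N : nat) :
  u <> v -> pi u = pi v -> valid pi eps delta E ->
  (size (ldivw v u) <= N)%N -> N.+1%:R * eps <= 1 ->
  (0 < normE E)%N /\ delta * N.+1%:R <= (size (ldivw v u)).+1%:R.
Proof.
move=> uv pi_uv E_valid k_le_N eps_small.
have [/andP[delta_gt0 _] _ _ _] := E_valid.
have k_gt0 : (0 < size (ldivw v u))%N.
  by rewrite lt0n size_eq0; apply/eqP => /ldivw_nil.
have [rho [rho_hom rho_ldivw rho_supp]] :=
  exists_path_rep (fred_reduced _) (introT andP (conj k_gt0 k_le_N)).
have rho_uv : rho u != rho v.
  apply: contra rho_ldivw => /eqP rho_uv; apply/eqP.
  rewrite eval_word_fred eval_word_cat eval_word_invw.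
  by rewrite -!(hom_eval_word (H := perm_grp _) rho_hom) rho_uv /= mulVg.
rewrite -[N.+1]card_ord in eps_small.
have [r rE far] := valid_far_relator E_valid eps_small rho_hom pi_uv rho_uv.
split.
  apply: leq_trans (wlen_le_normE rE); rewrite lt0n size_eq0.
  apply: contraTneq far => r_nil; rewrite -ltNge.
  by rewrite (hom_eval_word (H := perm_grp _) rho_hom) r_nil dOmE hamming_refl mul0r.
rewrite -ler_pdivlMr ?ltr0n // (le_trans far) // dOmE card_ord ler_wpM2r ?invr_ge0 //.
by rewrite ler_nat.
Qed.

Lemma valid_delta_le (u v : FG X) (eps delta : R) (E : seq (FG X)) :
  u <> v -> pi u = pi v -> valid pi eps delta E -> 0 < eps ->
  (size (ldivw v u)).+1%:R * eps <= 1 ->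
  (0 < normE E)%N /\ delta <= 2 * (size (ldivw v u)).+1%:R * eps.
Proof.
move=> uv pi_uv E_valid eps_gt0; set k := size _ => k_small.
have [/andP[delta_gt0 _] _ _ _] := E_valid.
have le_inv_eps m : (m%:R <= eps^-1) = (m%:R * eps <= 1).
  by rewrite -(ler_pM2r eps_gt0) mulVf ?gt_eqF.
set n := Num.truncn eps^-1.
have inv_eps_ge0 : 0 <= eps^-1 by rewrite invr_ge0 ltW.
have k_lt_n : (k < n)%N by rewrite truncn_ge_nat // le_inv_eps.
have n_small : n%:R * eps <= 1 by rewrite -le_inv_eps truncn_le.
have n_large : 1 < n.+1%:R * eps.
  by rewrite -[X in X < _](mulVf (lt0r_neq0 eps_gt0)) ltr_pM2r // truncnS_gt.
have n_eq : n.-1.+1 = n by lia.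
have [||normE_gt0 delta_n] := valid_path_bound (N := n.-1) uv pi_uv E_valid.
- by lia.
- by rewrite n_eq.
rewrite n_eq in delta_n; split => //.
have n1_le_2n : n.+1%:R <= 2 * n%:R :> R by rewrite -natrM ler_nat; lia.
apply: le_trans (_ : delta <= delta * (2 * n%:R * eps)) _.
  rewrite ler_peMr ?(ltW delta_gt0) //.
  by apply: le_trans (ltW n_large) _; rewrite ler_pM2r.
rewrite (_ : _ * (_ * eps) = (delta * n%:R) * (2 * eps)); last by ring.
rewrite (_ : 2 * k.+1%:R * eps = k.+1%:R * (2 * eps)); last by ring.
by rewrite ler_wpM2r // mulr_ge0 // ltW.
Qed.

Lemma valid_bijective (eps : R) : bijective pi -> 0 < eps -> valid pi eps 1 [::].
Proof.
move=> [pi' piK pi'K] eps_gt0; split => //; first by rewrite ltr01 lexx.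
move=> Om rho rho_hom _; exists (fun g => rho (pi' g)); split.
  by move=> a b; rewrite -rho_hom -{1}(pi'K a) -{1}(pi'K b) -pi_hom piK.
by move=> x; rewrite piK dOmE hamming_refl mul0r.
Qed.

Lemma Fstab_le (x delta : R) E :
  valid pi x^-1 delta E -> Fstab pi x <= (normE E)%:R / delta.
Proof.
move=> E_valid; apply: ge_inf; last by exists delta, E.
exists 0 => _ [d [E' [[/andP[d_gt0 _] _ _ _] ->]]].
by rewrite divr_ge0 // ltW.
Qed.

Lemma Fstab_ge (x t : R) :
  stable R pi -> 0 < x ->
  (forall delta E, valid pi x^-1 delta E -> t <= (normE E)%:R / delta) -> t <= Fstab pi x.
Proof.
move=> pi_stable x_gt0 t_le; apply: lb_le_inf; last first.
  by move=> _ [delta [E [E_valid ->]]]; apply: t_le.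
have [delta [E E_valid]] : exists delta E, valid pi x^-1 delta E.
  by apply: pi_stable; rewrite invr_gt0.
by exists ((normE E)%:R / delta), delta, E.
Qed.

Lemma mulr_div_le_half (L C : nat) (eps : R) :
  (2 * L <= C)%N -> (0 < C)%N -> 0 <= eps -> L%:R * (eps / C%:R) <= eps / 2.
Proof.
move=> LC C_gt0 eps_ge0; rewrite mulrA ler_pdivrMr ?ltr0n //.
have : (2 * L)%:R <= C%:R :> R by rewrite ler_nat.
rewrite natrM; nra.
Qed.

End Presentation.

Section ChangeOfGenerators.
Variables (G : grp) (X1 X2 : finType) (pi1 : FG X1 -> G) (pi2 : FG X2 -> G).
Hypotheses (pi1_hom : FG_hom pi1) (pi2_hom : FG_hom pi2).
Variables (v : X1 -> FG X2) (u : X2 -> FG X1).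
Hypotheses (pi2_v : forall x, pi2 (v x) = pi1 (gen x))
           (pi1_u : forall y, pi1 (u y) = pi2 (gen y)).

Definition subst_letter (a : X1 * bool) : seq (X2 * bool) :=
  if a.2 then invw (sval (v a.1)) else sval (v a.1).

Definition substw (r : FG X1) : FG X2 :=
  exist _ (fred (flatten (map subst_letter (sval r)))) (fred_reduced _).

Lemma hom_substw (H : grp) (h : FG X2 -> H) : FG_hom h ->
  forall r, h (substw r) = eval_word (fun x => h (v x)) (sval r).
Proof.
move=> h_hom r; rewrite (hom_eval_word h_hom) /= eval_word_fred.
elim: (sval r) => [|a s IH] //=; rewrite eval_word_cat IH; congr gmul.
by rewrite /subst_letter /eval_letter; case: a.2; rewrite ?eval_word_invw -hom_eval_word.
Qed.

Lemma pi2_substw r : pi2 (substw r) = pi1 r.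
Proof.
by rewrite (hom_substw pi2_hom) (hom_eval_word pi1_hom); apply: eq_eval_word.
Qed.

Definition retract_rel (y : X2) : FG X2 :=
  exist _ (fred ((y, true) :: sval (substw (u y)))) (fred_reduced _).

Lemma hom_retract_rel (H : grp) (h : FG X2 -> H) : FG_hom h ->
  forall y, h (retract_rel y) = gmul (ginv (h (gen y))) (h (substw (u y))).
Proof.
move=> h_hom y; rewrite (hom_eval_word h_hom (retract_rel y)).
have -> : sval (retract_rel y) = fred ((y, true) :: sval (substw (u y))) by [].
by rewrite eval_word_fred (hom_eval_word h_hom (substw (u y))).
Qed.

Lemma pi2_retract_rel y : pi2 (retract_rel y) = gone G.
Proof. by rewrite (hom_retract_rel pi2_hom) pi2_substw pi1_u gmulV. Qed.

Definition vlen := \max_x wlen (v x).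
Definition ulen := \max_y wlen (u y).

Lemma wlen_substw r : wlen (substw r) <= vlen * wlen r.
Proof.
rewrite /wlen (leq_trans (size_fred _)) //; elim: (sval r) => [|a s IH] //=.
rewrite size_cat mulnS leq_add // /subst_letter.
by case: a.2; rewrite ?size_rev ?size_map; apply: (leq_bigmax (F := fun x => wlen (v x))).
Qed.

Lemma wlen_retract_rel y : wlen (retract_rel y) <= 1 + vlen * ulen.
Proof.
rewrite /wlen (leq_trans (size_fred _)) //= add1n ltnS (leq_trans (wlen_substw _)) //.
by rewrite leq_mul2l (leq_bigmax (F := fun y => wlen (u y))) orbT.
Qed.

Definition transfer_rels (E : seq (FG X1)) :=
  undup (map substw E ++ map retract_rel (enum X2)).

Lemma normE_transfer_rels E :
  normE (transfer_rels E) <= vlen * normE E + #|X2| * (1 + vlen * ulen).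
Proof.
rewrite (leq_trans (normE_undup _)) // /normE big_cat /= leq_add //.
  by rewrite big_map big_distrr leq_sum // => r _; apply: wlen_substw.
rewrite big_map big_enum -sum_nat_const leq_sum // => y _; exact: wlen_retract_rel.
Qed.

(* 2 ulen |X1| makes eps' small enough for valid_transfer; with
   K = #|X2| (1 + vlen ulen), 2 (vlen + K) absorbs the length bound
   vlen ||E|| + K of transfer_rels E (the factor 2 pays for delta = eps / 2 when
   pi1 is bijective); 4 (k + 1) forces delta <= eps / 2 otherwise. *)
Definition gens_const (k : nat) : nat :=
  2 * (ulen * #|X1| + vlen + #|X2| * (1 + vlen * ulen)) + 4 * k.+1.

Lemma hamming_gen_retract (Om : finType) (rho : FG X2 -> {perm Om})
    (phi : G -> {perm Om}) y :
  FG_perm_hom rho -> grp_perm_hom phi ->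
  hamming (rho (gen y)) (phi (pi2 (gen y))) <=
  hamming (rho (retract_rel y)) 1 + ulen * \sum_x hamming (rho (v x)) (phi (pi1 (gen x))).
Proof.
move=> rho_hom phi_hom.
have phi_pi1_hom : @FG_hom X1 (perm_grp Om) (fun r => phi (pi1 r)).
  by move=> r s; rewrite pi1_hom phi_hom.
rewrite (hom_retract_rel (H := perm_grp Om) rho_hom) /= hamming_mulV1 -pi1_u.
rewrite (hom_substw (H := perm_grp Om) rho_hom) (hom_eval_word phi_pi1_hom).
set w := sval (u y).
apply: leq_trans (hamming_triangle _ (@eval_word _ (perm_grp Om) (fun x => rho (v x)) w) _) _.
rewrite leq_add2l.
apply: leq_trans (hamming_eval_word _ _ _) _.
by rewrite leq_mul2r (leq_bigmax (F := fun y => wlen (u y))) orbT.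
Qed.

Variable R : realType.
Local Open Scope ring_scope.

Lemma valid_transfer (eps eps' delta : R) E :
  0 < eps -> (ulen * #|X1|)%:R * eps' <= eps / 2 -> valid pi1 eps' delta E ->
  valid pi2 eps (Num.min delta (eps / 2)) (transfer_rels E).
Proof.
move=> eps_gt0 eps'_small [/andP[delta_gt0 delta_le1] _ E_ker E_valid].
have min_le_delta : Num.min delta (eps / 2) <= delta by rewrite ge_min lexx.
have min_le_eps2 : Num.min delta (eps / 2) <= eps / 2 by rewrite ge_min lexx orbT.
split.
- by rewrite lt_min delta_gt0 divr_gt0 //= (le_trans min_le_delta).
- exact: undup_uniq.
- move=> r; rewrite mem_undup mem_cat => /orP[/mapP[s sE ->]|/mapP[y _ ->]].
    by rewrite pi2_substw E_ker.
  exact: pi2_retract_rel.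
move=> Om rho rho_hom rho_small.
have rho_substw_hom : FG_perm_hom (fun r => rho (substw r)).
  move=> r s; rewrite !(hom_substw (H := perm_grp Om) rho_hom).
  exact: (@FG_hom_eval_word _ (perm_grp Om)).
have [phi [phi_hom phi_close]] : exists phi : G -> {perm Om}, grp_perm_hom phi /\
    forall x, dOm R (rho (substw (gen x))) (phi (pi1 (gen x))) < eps'.
  apply: (E_valid _ _ rho_substw_hom) => r rE.
  apply: lt_le_trans min_le_delta; apply: rho_small.
  by rewrite mem_undup mem_cat map_f.
exists phi; split => // y.
have rho_v x : rho (substw (gen x)) = rho (v x).
  by rewrite (hom_substw (H := perm_grp Om) rho_hom) /= mulg1.
have retract_small : dOm R (rho (retract_rel y)) 1 < eps / 2.
  apply: lt_le_trans min_le_eps2; apply: rho_small.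
  by rewrite mem_undup mem_cat map_f ?orbT ?mem_enum.
have gens_close : \sum_x dOm R (rho (v x)) (phi (pi1 (gen x))) <= #|X1|%:R * eps'.
  rewrite -sum1_card natr_sum mulr_suml ler_sum // => x _.
  by rewrite mul1r -rho_v ltW.
have Om_inv_ge0 : 0 <= (#|Om|%:R : R)^-1 by rewrite invr_ge0.
have := hamming_gen_retract y rho_hom phi_hom; rewrite -(ler_nat R) natrD natrM natr_sum.
move=> /(ler_wpM2r Om_inv_ge0) /le_lt_trans; apply.
rewrite mulrDl -mulrA mulr_suml -!dOmE (lt_le_trans _ (_ : eps / 2 + eps / 2 <= eps)) //.
  rewrite ltr_leD // (le_trans (ler_wpM2l _ gens_close)) // mulrA -natrM.
  by rewrite (le_trans _ eps'_small).
by rewrite -splitr.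
Qed.

Lemma transfer_stable : stable R pi1 -> stable R pi2.
Proof.
move=> pi1_stable eps eps_gt0; set C := gens_const 0.
have C_gt0 : (0 < C)%N by rewrite /C /gens_const; lia.
have [delta [E E_valid]] : exists delta E, valid pi1 (eps / C%:R) delta E.
  by apply: pi1_stable; rewrite divr_gt0 ?ltr0n.
exists (Num.min delta (eps / 2)), (transfer_rels E).
apply: valid_transfer E_valid => //.
by apply: mulr_div_le_half; rewrite ?ltW // /C /gens_const; lia.
Qed.

Lemma Fstab_bijective :
  bijective pi1 -> forall x : R, 1 <= x -> Fstab pi2 x <= (gens_const 0)%:R * x.
Proof.
move=> pi1_bij x x_ge1; set C := gens_const 0.
have x_inv_gt0 : 0 < x^-1 by rewrite invr_gt0; lra.
have C_gt0 : (0 < C)%N by rewrite /C /gens_const; lia.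
have eps'_gt0 : 0 < x^-1 / C%:R by rewrite divr_gt0 ?ltr0n.
have eps'_small : (ulen * #|X1|)%:R * (x^-1 / C%:R) <= x^-1 / 2.
  by apply: mulr_div_le_half; rewrite ?ltW // /C /gens_const; lia.
have := valid_transfer x_inv_gt0 eps'_small
  (valid_bijective pi1_hom pi1_bij eps'_gt0).
have -> : Num.min 1 (x^-1 / 2) = x^-1 / 2.
  have x_inv_le1 : x^-1 <= 1 by rewrite invf_le1; lra.
  by apply/min_idPr; lra.
move/Fstab_le/le_trans; apply.
have := normE_transfer_rels [::]; rewrite /normE big_nil muln0 add0n -(ler_nat R).
have : (2 * (#|X2| * (1 + vlen * ulen)))%:R <= C%:R :> R by rewrite ler_nat /C /gens_const; lia.
rewrite invf_div invrK natrM; nra.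
Qed.

Lemma Fstab_not_injective (a b : FG X1) (C : nat) :
  stable R pi1 -> a <> b -> pi1 a = pi1 b -> (gens_const (size (ldivw b a)) <= C)%N ->
  forall x : R, 1 <= x -> Fstab pi2 x <= C%:R * Fstab pi1 (C%:R * x).
Proof.
move=> pi1_stable ab pi1_ab; rewrite /gens_const; set k := size _ => C_ge x x_ge1.
have C_gt0 : (0 : R) < C%:R by rewrite ltr0n; lia.
have x_inv_gt0 : 0 < x^-1 by rewrite invr_gt0; lra.
rewrite -ler_pdivrMl //; apply: Fstab_ge => // [|delta E E_valid].
  by rewrite mulr_gt0 //; lra.
have inv_Cx : (C%:R * x)^-1 = x^-1 / C%:R by rewrite invfM mulrC.
have k1_le_C : k.+1%:R <= C%:R :> R by rewrite ler_nat; lia.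
have [||normE_gt0 delta_small] := valid_delta_le pi1_hom ab pi1_ab E_valid.
- by rewrite invr_gt0 mulr_gt0 //; lra.
- by rewrite ler_pdivrMr ?mul1r ?mulr_gt0 //; nra.
have delta_le : delta <= x^-1 / 2.
  apply: le_trans delta_small _; rewrite inv_Cx -natrM.
  by apply: mulr_div_le_half; rewrite ?ltW //; lia.
have eps'_small : (ulen * #|X1|)%:R * (C%:R * x)^-1 <= x^-1 / 2.
  by rewrite inv_Cx; apply: mulr_div_le_half; rewrite ?ltW //; lia.
have [/andP[delta_gt0 _] _ _ _] := E_valid.
have := valid_transfer x_inv_gt0 eps'_small E_valid.
rewrite (min_idPl delta_le) => /Fstab_le; rewrite ler_pdivrMl // => /le_trans; apply.
rewrite mulrA ler_pM2r ?invr_gt0 // -natrM ler_nat.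
apply: leq_trans (normE_transfer_rels E) _.
apply: (@leq_trans ((vlen + #|X2| * (1 + vlen * ulen)) * normE E)).
  by rewrite mulnDl leq_add2l leq_pmulr.
by rewrite leq_mul2r; apply/orP; right; lia.
Qed.

End ChangeOfGenerators.

Lemma lift_gens (X Y : finType) (G : grp) (pi : FG X -> G) (f : Y -> G) :
  (forall g : G, exists w, pi w = g) -> exists h : Y -> FG X, forall y, pi (h y) = f y.
Proof. by move=> pi_onto; have [h hP] := choice (fun y => pi_onto (f y)); exists h. Qed.

Lemma not_bijective_collision (X : finType) (G : grp) (pi : FG X -> G) :
  (forall g : G, exists w, pi w = g) -> ~ bijective pi -> exists a b, a <> b /\ pi a = pi b.
Proof.
move=> pi_onto pi_nbij; apply: contrapT => no_collision; apply: pi_nbij.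
have [pi' pi'K] := choice pi_onto; exists pi' => // w.
by apply: contrapT => w_neq; apply: no_collision; exists (pi' (pi w)), w.
Qed.

Local Open Scope ring_scope.

Theorem proposition2p5 (R : realType) (G : grp) (X1 X2 : finType)
    (pi1 : FG X1 -> G) (pi2 : FG X2 -> G) :
  FG_epi pi1 -> FG_epi pi2 -> stable R pi1 ->
  stable R pi2 /\
  exists C0 : R, 1 <= C0 /\
    forall x : R, 1 <= x ->
      (bijective pi1 -> Fstab pi2 x <= C0 * x) /\
      (~ bijective pi1 -> Fstab pi2 x <= C0 * Fstab pi1 (C0 * x)).
Proof.
move=> [pi1_hom pi1_onto] [pi2_hom pi2_onto] pi1_stable.
have [v pi2_v] : exists v, forall x, pi2 (v x) = pi1 (gen x) := lift_gens _ pi2_onto.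
have [u pi1_u] : exists u, forall y, pi1 (u y) = pi2 (gen y) := lift_gens _ pi1_onto.
split; first exact: (transfer_stable pi1_hom pi2_hom pi2_v pi1_u pi1_stable).
have const_ge1 k : 1 <= (gens_const v u k)%:R :> R by rewrite ler1n /gens_const addn_gt0 orbT.
have [pi1_bij|pi1_nbij] := pselect (bijective pi1).
  exists (gens_const v u 0)%:R; split => // x x_ge1; split => // _.
  exact: (Fstab_bijective pi1_hom pi2_hom pi2_v pi1_u pi1_bij x_ge1).
have [a [b [ab pi1_ab]]] := not_bijective_collision pi1_onto pi1_nbij.
exists (gens_const v u (size (ldivw b a)))%:R; split => // x x_ge1; split => // _.
exact: (Fstab_not_injective pi1_hom pi2_hom pi2_v pi1_u pi1_stable ab pi1_ab (leqnn _) x_ge1).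
Qed.
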